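(* Let $f:\mathbb{R}^n\to\mathbb{R}$ have $L$-Lipschitz continuous gradient ($L>0$) and satisfy the Polyak–Łojasiewicz condition with constant $\mu>0$: $f(x)-f^*\le \frac{1}{2\mu}\|\nabla f(x)\|^2$ for all $x$, where $f^*=f(x_* )$ for a minimizer $x_*$. Let $\Delta>0$ and suppose an inexact gradient $\widetilde{\nabla}f(x)$ is available with $\|\nabla f(x)-\widetilde{\nabla}f(x)\|\le\Delta$ for all $x$. Consider the gradient method $x_{k+1}=x_k-\frac1L\widetilde{\nabla}f(x_k)$ from $x_0$, and let $$N_*=\left\lceil\frac{L}{\mu}\ln\frac{\mu(f(x_0)-f^* )}{6\Delta^2}\right\rceil.$$ Suppose one of the following holds: (1) the method performs $N_*$ steps (output $\widehat{x}=x_{N_*}$); or (2) for some $N\le N_*$ the stopping criterion $\|\widetilde{\nabla}f(x_k)\|\le\sqrt6\,\Delta$ is satisfied for the first time at iteration $N$ (output $\widehat{x}=x_N$). Then $$f(\widehat{x})-f^*\le\frac{7\Delta^2}{\mu}$$ and $$\|\widehat{x}-x_0\|\le\frac{2\Delta}{\mu}\sqrt{1+\frac{L}{\mu}}\left\lceil\ln\frac{\mu(f(x_0)-f^* )}{6\Delta^2}\right\rceil+\frac{4\sqrt{L(f(x_0)-f^* )}}{\mu}.$$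
   Context: $\|\cdot\|$ is the Euclidean norm; $\lceil\cdot\rceil$ is the ceiling function. *)

From HB Require Import structures.
From mathcomp Require Import all_boot all_order all_algebra.
From mathcomp Require Import all_classical all_reals all_analysis.
Set Implicit Arguments. Unset Strict Implicit. Unset Printing Implicit Defensive.
Import Order.TTheory GRing.Theory Num.Theory.
Import numFieldNormedType.Exports.
Local Open Scope ring_scope.

Definition dotv {R : realType} {n : nat} (u v : 'rV[R]_n) : R :=
  \sum_(i < n) u ord0 i * v ord0 i.

Definition enorm {R : realType} {n : nat} (u : 'rV[R]_n) : R :=
  Num.sqrt (dotv u u).

Definition is_gradient {R : realType} {n : nat}
  (f : 'rV[R]_n -> R) (g : 'rV[R]_n -> 'rV[R]_n) : Prop :=
  forall x : 'rV[R]_n, differentiable f x /\ forall h, 'd f x h = dotv (g x) h.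

(** One step with an inexact gradient obeys, by the descent lemma,
    f (x - v / L) <= f x + (|grad f x - v|^2 - |grad f x|^2) / (2 L), so with
    |grad f - v| <= Delta and the PL inequality the optimality gap satisfies
    gap_(k+1) <= (1 - mu/L) gap_k + Delta^2 / (2 L), i.e.
    gap_k <= (1 - mu/L)^k gap_0 + Delta^2 / (2 mu).  Since (1 - mu/L)^k <= exp (- k mu/L),
    after Nstar steps the first term is at most 6 Delta^2 / mu; if instead the stopping
    test fires, |grad f| <= (sqrt 6 + 1) Delta and PL alone gives the bound.
    For the distance, a step has length |v| / L <= (|grad f x_k| + Delta) / L, and
    |grad f x_k| <= sqrt (2 L gap_k) is bounded by a multiple of sqrt (1 - mu/L)^k, whose
    series sums to at most 2 L / mu, plus a Delta-term that accrues at most Nstar times. *)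

From HB Require Import structures.
From mathcomp Require Import all_boot all_order all_algebra.
From mathcomp Require Import all_classical all_reals all_analysis.
From mathcomp Require Import ring lra.
Import Order.TTheory GRing.Theory Num.Theory.
Import numFieldNormedType.Exports.
Local Open Scope ring_scope.

Section Euclidean.
Context {R : realType} {n : nat}.
Implicit Types u v w : 'rV[R]_n.

Lemma dotvC u v : dotv u v = dotv v u.
Proof. by apply: eq_bigr => i _; rewrite mulrC. Qed.

Lemma dotvDl u v w : dotv (u + v) w = dotv u w + dotv v w.
Proof. by rewrite /dotv -big_split; apply: eq_bigr => i _; rewrite !mxE mulrDl. Qed.

Lemma dotvZl a u w : dotv (a *: u) w = a * dotv u w.
Proof. by rewrite /dotv mulr_sumr; apply: eq_bigr => i _; rewrite !mxE mulrA. Qed.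

Lemma dotvNl u w : dotv (- u) w = - dotv u w.
Proof. by rewrite -scaleN1r dotvZl mulN1r. Qed.

Lemma dotvBl u v w : dotv (u - v) w = dotv u w - dotv v w.
Proof. by rewrite dotvDl dotvNl. Qed.

Lemma dotvDr u v w : dotv w (u + v) = dotv w u + dotv w v.
Proof. by rewrite dotvC dotvDl !(dotvC w). Qed.

Lemma dotvZr a u w : dotv w (a *: u) = a * dotv w u.
Proof. by rewrite dotvC dotvZl dotvC. Qed.

Lemma dotvNr u w : dotv w (- u) = - dotv w u.
Proof. by rewrite dotvC dotvNl dotvC. Qed.

Lemma dotvBr u v w : dotv w (u - v) = dotv w u - dotv w v.
Proof. by rewrite dotvDr dotvNr. Qed.

Lemma dotv0r w : dotv w 0 = 0.
Proof. by rewrite /dotv big1 // => i _; rewrite mxE mulr0. Qed.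

Lemma dotvv_ge0 u : 0 <= dotv u u.
Proof. by apply: sumr_ge0 => i _; rewrite -expr2 sqr_ge0. Qed.

Lemma dotvv_eq0 u : (dotv u u == 0) = (u == 0).
Proof.
apply/idP/eqP => [|->]; last by rewrite dotv0r.
rewrite psumr_eq0 => [/allP uu0|i _]; last by rewrite -expr2 sqr_ge0.
apply/rowP => i; have /(_ (mem_index_enum i)) := uu0 i.
by rewrite -expr2 sqrf_eq0 mxE => /eqP.
Qed.

Lemma enorm_ge0 u : 0 <= enorm u.
Proof. exact: sqrtr_ge0. Qed.

Lemma enorm_sqr u : enorm u ^+ 2 = dotv u u.
Proof. by rewrite sqr_sqrtr // dotvv_ge0. Qed.

Lemma enorm0 : enorm (0 : 'rV[R]_n) = 0.
Proof. by rewrite /enorm dotv0r sqrtr0. Qed.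

Lemma enormN u : enorm (- u) = enorm u.
Proof. by rewrite /enorm dotvNl dotvNr opprK. Qed.

Lemma enormZ a u : enorm (a *: u) = `|a| * enorm u.
Proof. by rewrite /enorm dotvZl dotvZr mulrA -expr2 sqrtrM ?sqr_ge0 // sqrtr_sqr. Qed.

Lemma cauchy_schwarz u v : dotv u v ^+ 2 <= dotv u u * dotv v v.
Proof.
have [v0|vv_gt0] := eqVneq v 0.
  by rewrite v0 !dotv0r expr0n mulr0.
have {}vv_gt0 : 0 < dotv v v by rewrite lt_def dotvv_eq0 vv_gt0 dotvv_ge0.
pose t := dotv u v / dotv v v.
have : 0 <= dotv (u - t *: v) (u - t *: v) by exact: dotvv_ge0.
have -> : dotv (u - t *: v) (u - t *: v) = dotv u u - dotv u v ^+ 2 / dotv v v.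
  by rewrite !(dotvBl, dotvBr, dotvZl, dotvZr) (dotvC v u) /t; field; rewrite gt_eqF.
by rewrite subr_ge0 ler_pdivrMr.
Qed.

Lemma dotv_le u v : dotv u v <= enorm u * enorm v.
Proof.
rewrite -sqrtrM ?dotvv_ge0 // (le_trans (ler_norm _)) // -sqrtr_sqr.
by rewrite ler_wsqrtr // cauchy_schwarz.
Qed.

Lemma enormD_le u v : enorm (u + v) <= enorm u + enorm v.
Proof.
rewrite -(ler_pXn2r (_ : 0 < 2)%N) ?nnegrE ?addr_ge0 ?enorm_ge0 //.
rewrite sqrrD !enorm_sqr dotvDl !dotvDr (dotvC v u).
by have := dotv_le u v; lra.
Qed.

Lemma enorm_le_addB u v : enorm u <= enorm v + enorm (u - v).
Proof. by rewrite -{1}(subrKC v u) enormD_le. Qed.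

Lemma enormB_telescope_le (y : nat -> 'rV[R]_n) m :
  enorm (y m - y 0%N) <= \sum_(k < m) enorm (y k.+1 - y k).
Proof.
elim: m => [|m IH]; first by rewrite subrr enorm0 big_ord0.
rewrite big_ord_recr /= (le_trans _ (lerD IH (lexx _))) //.
by rewrite -(subrKA (y m)) [X in enorm X]addrC enormD_le.
Qed.

End Euclidean.

Section LipschitzGradient.
Local Open Scope classical_set_scope.
Context {R : realType} {n : nat} {f : 'rV[R]_n -> R} {g : 'rV[R]_n -> 'rV[R]_n}.
Hypothesis grad_f : is_gradient f g.

Lemma is_derive_line (x d : 'rV[R]_n) (t : R) :
  is_derive t 1 (fun s : R => f (x + s *: d)) (dotv (g (x + t *: d)) d).
Proof.
pose l : R -> 'rV[R]_n := cst x + *:%R^~ d.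
have l_diff : is_diff t l (0 + *:%R^~ d) by apply: is_diffD.
have [dl _] := l_diff.
have [df dfE] := grad_f (l t).
have -> : (fun s : R => f (x + s *: d)) = f \o l by [].
apply: DeriveDef; first exact/diff_derivable/differentiable_comp.
rewrite deriveE; last exact: differentiable_comp.
rewrite diff_comp; [|exact: dl|exact: df].
(* Passing [l_diff] explicitly avoids a very slow search for the [is_diff] instance. *)
by rewrite (@diff_val _ _ _ _ _ _ _ l_diff) /= add0r scale1r dfE.
Qed.

Context {L : R}.
Hypothesis g_lipschitz : forall y z, enorm (g y - g z) <= L * enorm (y - z).

(* Mean value theorem for s |-> f (x + s d) - s <g x, d> - s^2 L |d|^2 / 2 on [0, 1]. *)
Lemma descent_lemma x y :
  f y <= f x + dotv (g x) (y - x) + L / 2 * enorm (y - x) ^+ 2.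
Proof.
set d := y - x; set a := dotv (g x) d; set b := L / 2 * enorm d ^+ 2.
pose phi s := f (x + s *: d).
pose psi : R -> R := (phi - a \*: (id : R -> R)) - b \*: ((id : R -> R) ^+ 2).
have psi_derive (c : R) :
    is_derive c 1 psi (dotv (g (x + c *: d)) d - a - b * (2 * c)).
  apply: is_derive_eq; first by apply: is_deriveB; apply: is_deriveB; exact: is_derive_line.
  by rewrite /= !scaler1 expr1.
have psi_cont : {within `[0, 1], continuous psi}.
  by apply: derivable_within_continuous => c _; have [] := psi_derive c.
have [c /andP[c_gt0 _] psi_mvt] := MVT ltr01 (fun c _ => psi_derive c) psi_cont.
have : psi 1 - psi 0 <= 0.
  rewrite psi_mvt subr0 mulr1 -dotvBl.
  have := g_lipschitz (x + c *: d) x; rewrite [x + _ - x]addrC addKr enormZ gtr0_norm // => lip.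
  have := dotv_le (g (x + c *: d) - g x) d.
  have := ler_wpM2r (enorm_ge0 d) lip.
  rewrite /b; nra.
rewrite /psi /phi /= !fctE /= scale0r addr0 scale1r /d subrKC.
rewrite expr1n expr0n /= !scaler1 !scaler0; lra.
Qed.

Hypothesis L_gt0 : 0 < L.

Lemma gradient_step_le v y :
  f (y - L^-1 *: v) <= f y + (enorm (g y - v) ^+ 2 - enorm (g y) ^+ 2) / (2 * L).
Proof.
have := descent_lemma y (y - L^-1 *: v).
rewrite [y - _ - y]addrC addKr dotvNr dotvZr enormN enormZ gtr0_norm ?invr_gt0 //.
rewrite exprMn !enorm_sqr dotvBl !dotvBr (dotvC v).
have -> : L / 2 * (L^-1 ^+ 2 * dotv v v) = L^-1 * dotv v v / 2 by field; rewrite gt_eqF.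
suff -> : (dotv (g y) (g y) - dotv (g y) v - (dotv (g y) v - dotv v v) - dotv (g y) (g y)) / (2 * L)
    = L^-1 * dotv v v / 2 - L^-1 * dotv (g y) v by lra.
by field; rewrite gt_eqF.
Qed.

Lemma sqr_grad_le {fs : R} : (forall y, fs <= f y) ->
  forall y, enorm (g y) ^+ 2 <= 2 * L * (f y - fs).
Proof.
move=> fs_le y; have := le_trans (fs_le _) (gradient_step_le (g y) y).
rewrite subrr enorm0 expr0n sub0r mulNr -ler_pdivrMl ?mulr_gt0 //; lra.
Qed.
End LipschitzGradient.

Lemma geometric_sum_le {R : realFieldType} (r : R) m :
  0 <= r < 1 -> \sum_(i < m) r ^+ i <= (1 - r)^-1.
Proof.
case/andP=> r_ge0 r_lt1; have r1_gt0 : 0 < 1 - r by rewrite subr_gt0.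
rewrite -(ler_pM2l r1_gt0) mulfV ?gt_eqF //.
have -> : (1 - r) * \sum_(i < m) r ^+ i = 1 - r ^+ m by rewrite -opprB mulNr -subrX1 opprB.
by rewrite lerBlDr lerDl exprn_ge0.
Qed.

Lemma powB_le_expR {R : realType} (a : R) m : a <= 1 -> (1 - a) ^+ m <= expR (- (m%:R * a)).
Proof.
move=> a_le1; rewrite -mulrN expRM_natl.
by apply: lerXn2r; rewrite ?nnegrE ?subr_ge0 ?expR_ge0 ?expR_ge1Dx.
Qed.

Lemma ltrD1_of_le_ceil {R : archiRealDomainType} (x : R) (k : int) :
  k <= Num.ceil x -> k%:~R < x + 1.
Proof.
move=> k_le; rewrite -ltrBlDr (le_lt_trans _ (ceilB1_lt x)) //.
by rewrite intrB lerD2r ler_int.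
Qed.

Lemma ceil_ge0_of_ge1_mul {R : archiRealFieldType} (a t : R) :
  1 <= a -> 0 <= Num.ceil (a * t) -> 0 <= Num.ceil t.
Proof. by rewrite !ceil_ge0 => a_ge1 at_gt; nra. Qed.

Lemma sqrtrD1_le {R : rcfType} (a : R) : 0 <= a -> Num.sqrt a + 1 <= 2 * Num.sqrt (1 + a).
Proof.
move=> a_ge0; rewrite mulr2n mulrDl mul1r lerD //; first by rewrite ler_wsqrtr // lerDr.
by rewrite -{1}sqrtr1 ler_wsqrtr // lerDl.
Qed.

Lemma sqrtr_le_id {R : rcfType} (a : R) : 1 <= a -> Num.sqrt a <= a.
Proof.
move=> a_ge1; have s_ge1 : 1 <= Num.sqrt a by rewrite -sqrtr1 ler_wsqrtr.
by have := sqr_sqrtr (le_trans ler01 a_ge1); nra.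
Qed.

Section InexactGradientMethod.
Context {R : realType} {n : nat} {f : 'rV[R]_n -> R} {g gt : 'rV[R]_n -> 'rV[R]_n}.
Context {L mu Delta fs : R} {x : nat -> 'rV[R]_n}.
Hypotheses (L_gt0 : 0 < L) (mu_gt0 : 0 < mu) (Delta_gt0 : 0 < Delta).
Hypotheses (grad_f : is_gradient f g)
  (g_lipschitz : forall y z, enorm (g y - g z) <= L * enorm (y - z)).
Hypotheses (fs_le : forall y, fs <= f y)
  (PL : forall y, f y - fs <= (2 * mu)^-1 * enorm (g y) ^+ 2).
Hypotheses (gt_err : forall y, enorm (g y - gt y) <= Delta)
  (x_succ : forall k, x k.+1 = x k - L^-1 *: gt (x k)).

Local Notation gap k := (f (x k) - fs).

Lemma PL_sqr_grad_ge y : 2 * mu * (f y - fs) <= enorm (g y) ^+ 2.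
Proof. by rewrite -ler_pdivlMl ?mulr_gt0 // mulrC PL. Qed.

Lemma PL_le_lipschitz y : 0 < f y - fs -> mu <= L.
Proof.
move=> gap_gt0.
have := le_trans (PL_sqr_grad_ge y) (sqr_grad_le grad_f g_lipschitz L_gt0 fs_le y).
by rewrite ler_pM2r // ler_pM2l.
Qed.

Lemma gap_succ_le k : gap k.+1 <= (1 - mu / L) * gap k + Delta ^+ 2 / (2 * L).
Proof.
have := gradient_step_le grad_f g_lipschitz L_gt0 (gt (x k)) (x k); rewrite -x_succ.
have err : enorm (g (x k) - gt (x k)) ^+ 2 <= Delta ^+ 2.
  by rewrite lerXn2r ?nnegrE ?enorm_ge0 ?gt_err // ltW.
have := PL_sqr_grad_ge (x k).
set E := enorm (_ - _) ^+ 2 in err *; set G := enorm (g _) ^+ 2 => G_ge.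
have : (E - G) / (2 * L) <= (Delta ^+ 2 - 2 * mu * gap k) / (2 * L).
  by rewrite ler_pM2r ?invr_gt0 ?mulr_gt0 //; lra.
have -> : (Delta ^+ 2 - 2 * mu * gap k) / (2 * L)
    = Delta ^+ 2 / (2 * L) - mu / L * gap k by field; rewrite gt_eqF.
lra.
Qed.

Lemma gap_le_of_stop y :
  enorm (gt y) <= Num.sqrt 6 * Delta -> f y - fs <= 7 * Delta ^+ 2 / mu.
Proof.
move=> stop; apply: le_trans (PL y) _.
have g_le : enorm (g y) <= (Num.sqrt 6 + 1) * Delta.
  by rewrite mulrDl mul1r (le_trans (enorm_le_addB _ (gt y))) // lerD ?gt_err.
have sqrt6_ge0 := sqrtr_ge0 (6 : R).
have sqrt6_sqr : Num.sqrt 6 ^+ 2 = 6 :> R by rewrite sqr_sqrtr.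
have sqrt6_le : Num.sqrt 6 <= 5 / 2 :> R by nra.
have : enorm (g y) ^+ 2 <= 14 * Delta ^+ 2.
  apply: le_trans (_ : ((Num.sqrt 6 + 1) * Delta) ^+ 2 <= _).
    by rewrite lerXn2r ?nnegrE ?enorm_ge0 ?mulr_ge0 ?addr_ge0 // ltW.
  nra.
have -> : 7 * Delta ^+ 2 / mu = (2 * mu)^-1 * (14 * Delta ^+ 2) by field; rewrite gt_eqF.
by apply: ler_wpM2l; rewrite invr_ge0 mulr_ge0 // ltW.
Qed.

Hypothesis gap0_gt0 : 0 < gap 0%N.

Let mu_le_L : mu <= L := PL_le_lipschitz (x 0%N) gap0_gt0.

Let muL_le1 : mu / L <= 1.
Proof. by rewrite ler_pdivrMr // mul1r. Qed.

Let rate_ge0 : 0 <= 1 - mu / L.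
Proof. by rewrite subr_ge0. Qed.

Lemma gap_le k : gap k <= (1 - mu / L) ^+ k * gap 0%N + Delta ^+ 2 / (2 * mu).
Proof.
elim: k => [|k IH].
  by rewrite expr0 mul1r lerDl divr_ge0 ?sqr_ge0 // mulr_ge0 // ltW.
apply: le_trans (gap_succ_le k) _.
have := ler_wpM2l rate_ge0 IH.
set q := 1 - mu / L; set D := Delta ^+ 2; rewrite mulrDr exprS -mulrA.
have : q * (D / (2 * mu)) + D / (2 * L) = D / (2 * mu) by rewrite /q; field; rewrite !gt_eqF.
lra.
Qed.

Lemma gap_le_of_ln_le k :
  L / mu * ln (mu * gap 0%N / (6 * Delta ^+ 2)) <= k%:R -> gap k <= 7 * Delta ^+ 2 / mu.
Proof.
set r := mu * gap 0%N / (6 * Delta ^+ 2) => k_ge.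
have r_gt0 : 0 < r by rewrite divr_gt0 ?mulr_gt0 // exprn_gt0.
have contract : (1 - mu / L) ^+ k <= r^-1.
  apply: le_trans (powB_le_expR _ k muL_le1) _.
  have -> : r^-1 = expR (- ln r) by rewrite expRN lnK.
  rewrite ler_expR lerN2.
  have := ler_wpM2l (divr_ge0 (ltW mu_gt0) (ltW L_gt0)) k_ge.
  have -> : mu / L * (L / mu * ln r) = ln r by field; rewrite !gt_eqF.
  by rewrite [k%:R * _]mulrC.
have := ler_wpM2r (ltW gap0_gt0) contract.
have -> : r^-1 * gap 0%N = 6 * Delta ^+ 2 / mu.
  by rewrite /r; field; rewrite !gt_eqF ?exprn_gt0.
have := gap_le k.
have : Delta ^+ 2 / (2 * mu) + 6 * Delta ^+ 2 / mu = 13 / 2 * (Delta ^+ 2 / mu).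
  by field; rewrite gt_eqF.
have : 7 * Delta ^+ 2 / mu = 7 * (Delta ^+ 2 / mu) by rewrite mulrA.
have : 0 <= Delta ^+ 2 / mu by rewrite divr_ge0 ?sqr_ge0 // ltW.
lra.
Qed.

(* The factor 3/2 stands for sqrt 2: |g|^2 <= 2 u^2 + v^2 <= (3/2 u + v)^2. *)
Lemma grad_norm_le k :
  enorm (g (x k)) <=
    3 / 2 * (Num.sqrt (1 - mu / L) ^+ k * Num.sqrt (L * gap 0%N)) + Delta * Num.sqrt (L / mu).
Proof.
set u := _ * Num.sqrt (L * gap 0%N); set v := Delta * _.
have u_ge0 : 0 <= u by rewrite mulr_ge0 ?exprn_ge0 ?sqrtr_ge0.
have v_ge0 : 0 <= v by rewrite mulr_ge0 ?sqrtr_ge0 // ltW.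
have sqr_le : enorm (g (x k)) ^+ 2 <= 2 * u ^+ 2 + v ^+ 2.
  apply: le_trans (sqr_grad_le grad_f g_lipschitz L_gt0 fs_le _) _.
  have -> : 2 * u ^+ 2 + v ^+ 2
      = 2 * L * ((1 - mu / L) ^+ k * gap 0%N + Delta ^+ 2 / (2 * mu)).
    rewrite /u /v !exprMn -exprM mulnC exprM.
    rewrite !sqr_sqrtr ?rate_ge0 ?(mulr_ge0 (ltW L_gt0) (ltW gap0_gt0))
      ?(divr_ge0 (ltW L_gt0) (ltW mu_gt0)) //.
    by field; rewrite gt_eqF.
  by apply: ler_wpM2l; [rewrite mulr_ge0 // ltW | exact: gap_le].
have rhs_ge0 : 0 <= 3 / 2 * u + v by lra.
rewrite -(ler_pXn2r (_ : 0 < 2)%N) ?nnegrE ?enorm_ge0 //.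
by apply: le_trans sqr_le _; nra.
Qed.

Lemma dist_le k :
  enorm (x k - x 0%N) <=
    3 * Num.sqrt (L * gap 0%N) / mu + k%:R * (Delta * (Num.sqrt (L / mu) + 1)) / L.
Proof.
set rho := Num.sqrt (1 - mu / L); set A := Num.sqrt (L * gap 0%N).
set s := Num.sqrt (L / mu).
have step i : enorm (x i.+1 - x i) <= L^-1 * (3 / 2 * A * rho ^+ i + Delta * (s + 1)).
  rewrite x_succ [x i - _ - x i]addrC addKr enormN enormZ gtr0_norm ?invr_gt0 //.
  apply: ler_wpM2l; first by rewrite invr_ge0 ltW.
  apply: le_trans (enorm_le_addB _ (g (x i))) _.
  rewrite -[enorm (gt _ - _)]enormN opprB.
  have -> : 3 / 2 * A * rho ^+ i + Delta * (s + 1) = 3 / 2 * (rho ^+ i * A) + Delta * s + Delta.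
    by ring.
  exact: lerD (grad_norm_le i) (gt_err _).
have rho_sqr : rho ^+ 2 = 1 - mu / L by rewrite sqr_sqrtr.
have rho_ge0 : 0 <= rho by exact: sqrtr_ge0.
have geo : \sum_(i < k) rho ^+ i <= 2 * (L / mu).
  have rho_lt1 : rho < 1 by rewrite -sqrtr1 ltr_sqrt // ltrBlDr ltrDl divr_gt0.
  apply: le_trans (geometric_sum_le _ k (introT andP (conj rho_ge0 rho_lt1))) _.
  rewrite invf_ple ?posrE ?subr_gt0 ?mulr_gt0 ?invr_gt0 //.
  have -> : (2 * (L / mu))^-1 = (1 - rho ^+ 2) / 2 by rewrite rho_sqr; field; rewrite !gt_eqF.
  nra.
apply: le_trans (enormB_telescope_le x k) _.
apply: le_trans (ler_sum _ (fun (i : 'I_k) (_ : true) => step i)) _.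
rewrite -mulr_sumr big_split /= -mulr_sumr sumr_const card_ord mulrDr.
apply: lerD; last by rewrite mulr_natl [L^-1 * _]mulrC.
have -> : 3 * A / mu = L^-1 * (3 / 2 * A * (2 * (L / mu))) by field; rewrite !gt_eqF.
apply: ler_wpM2l; first by rewrite invr_ge0 ltW.
by apply: ler_wpM2l; rewrite ?mulr_ge0 ?sqrtr_ge0.
Qed.

Lemma two_Delta_le_sqrt :
  1 < mu * gap 0%N / (6 * Delta ^+ 2) -> 2 * Delta <= Num.sqrt (L * gap 0%N).
Proof.
rewrite ltr_pdivlMr ?mul1r ?mulr_gt0 ?exprn_gt0 // => mu_gap_gt.
have mu_gap_le : mu * gap 0%N <= L * gap 0%N by rewrite ler_pM2r.
have Delta2_ge0 : 0 <= 2 * Delta by rewrite mulr_ge0 // ltW.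
rewrite -(ler_pXn2r (_ : 0 < 2)%N) ?nnegrE ?sqrtr_ge0 // sqr_sqrtr; first nra.
by rewrite mulr_ge0 // ltW.
Qed.

Lemma dist_le_of_le_Nstar k :
  k%:Z <= Num.ceil (L / mu * ln (mu * gap 0%N / (6 * Delta ^+ 2))) ->
  enorm (x k - x 0%N) <=
    2 * Delta / mu * Num.sqrt (1 + L / mu) *
      (Num.ceil (ln (mu * gap 0%N / (6 * Delta ^+ 2))))%:~R
    + 4 * Num.sqrt (L * gap 0%N) / mu.
Proof.
set r := mu * gap 0%N / (6 * Delta ^+ 2); set c := Num.ceil (ln r).
set S := Num.sqrt (1 + L / mu); set A := Num.sqrt (L * gap 0%N) => k_le.
have kappa_ge1 : 1 <= L / mu by rewrite ler_pdivlMr // mul1r.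
have [Delta_ge0 mu_ge0] := (ltW Delta_gt0, ltW mu_gt0).
have [-> | k_gt0] := posnP k.
  (* 0 <= Nstar forces 0 <= ceil (ln r), so the bound is nonnegative. *)
  have c_ge0 : 0 <= c%:~R :> R.
    by rewrite ler0z (ceil_ge0_of_ge1_mul _ _ kappa_ge1) // (le_trans _ k_le).
  by rewrite subrr enorm0; apply: addr_ge0; rewrite !mulr_ge0 ?invr_ge0 ?sqrtr_ge0.
have t_gt0 : 0 < ln r.
  by rewrite -(pmulr_rgt0 _ (lt_le_trans ltr01 kappa_ge1)) -ceil_gt0 (lt_le_trans _ k_le).
have A_ge : 2 * Delta <= A.
  by apply: two_Delta_le_sqrt; rewrite ltNge; apply: contraTN t_gt0 => /ln_le0; rewrite leNgt.
apply: le_trans (dist_le k) _; rewrite -/A.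
set s := Num.sqrt (L / mu).
have s1_le : s + 1 <= 2 * S by rewrite sqrtrD1_le // divr_ge0 // ltW.
have s1_ge0 : 0 <= s + 1 by rewrite addr_ge0 ?sqrtr_ge0.
have mu_s1_le : mu * (s + 1) <= 2 * L.
  have -> : 2 * L = mu * (2 * (L / mu)) by field; rewrite gt_eqF.
  by apply: ler_wpM2l => //; have := sqrtr_le_id _ kappa_ge1; rewrite -/s; lra.
have kmu_le : k%:R * mu <= L * ln r + mu.
  have -> : L * ln r + mu = (L / mu * ln r + 1) * mu by field; rewrite gt_eqF.
  by rewrite ler_pM2r //; apply/ltW/(ltrD1_of_le_ceil _ _ k_le).
have : 3 * A / mu = 3 * (A / mu) by rewrite mulrA.
have : 4 * A / mu = 4 * (A / mu) by rewrite mulrA.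
suff : k%:R * (Delta * (s + 1)) / L <= 2 * Delta / mu * S * c%:~R + A / mu by lra.
rewrite -(ler_pM2r (mulr_gt0 L_gt0 mu_gt0)).
have -> : k%:R * (Delta * (s + 1)) / L * (L * mu) = k%:R * mu * (Delta * (s + 1)).
  by field; rewrite gt_eqF.
have -> : (2 * Delta / mu * S * c%:~R + A / mu) * (L * mu)
    = L * Delta * (c%:~R * (2 * S)) + L * A by field; rewrite gt_eqF.
have := ler_wpM2r (mulr_ge0 Delta_ge0 s1_ge0) kmu_le.
have := ler_wpM2l (mulr_ge0 (ltW L_gt0) Delta_ge0) (ler_pM (ltW t_gt0) s1_ge0 (ceil_ge _) s1_le).
have := ler_wpM2l Delta_ge0 mu_s1_le.
have := ler_wpM2l (ltW L_gt0) A_ge.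
have : (L * ln r + mu) * (Delta * (s + 1)) = L * Delta * (ln r * (s + 1)) + Delta * (mu * (s + 1)).
  by ring.
have : Delta * (2 * L) = L * (2 * Delta) by ring.
lra.
Qed.

End InexactGradientMethod.

Theorem theorem3 (R : realType) (n : nat)
  (f : 'rV[R]_n -> R) (g gt : 'rV[R]_n -> 'rV[R]_n) (L mu Delta : R)
  (xstar : 'rV[R]_n) (x : nat -> 'rV[R]_n) (N : nat) :
  0 < L -> 0 < mu -> 0 < Delta ->
  is_gradient f g ->
  (forall y z, enorm (g y - g z) <= L * enorm (y - z)) ->
  (forall y, f xstar <= f y) ->
  (forall y, f y - f xstar <= (2 * mu)^-1 * enorm (g y) ^+ 2) ->
  (forall y, enorm (g y - gt y) <= Delta) ->
  (forall k, x k.+1 = x k - L^-1 *: gt (x k)) ->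
  let Nstar : int :=
    Num.ceil (L / mu * ln (mu * (f (x 0%N) - f xstar) / (6 * Delta ^+ 2))) in
  ((N%:Z = Nstar) \/
   ((N%:Z <= Nstar) /\ enorm (gt (x N)) <= Num.sqrt 6 * Delta /\
    (forall k, (k < N)%N -> Num.sqrt 6 * Delta < enorm (gt (x k))))) ->
  f (x N) - f xstar <= 7 * Delta ^+ 2 / mu /\
  enorm (x N - x 0%N) <=
    2 * Delta / mu * Num.sqrt (1 + L / mu) *
      (Num.ceil (ln (mu * (f (x 0%N) - f xstar) / (6 * Delta ^+ 2))))%:~R
    + 4 * Num.sqrt (L * (f (x 0%N) - f xstar)) / mu.
Proof.
move=> L_gt0 mu_gt0 Delta_gt0 grad_f g_lipschitz fs_le PL gt_err x_succ Nstar stop_rule.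
have N_le : N%:Z <= Nstar by case: stop_rule => [->|[]].
have [gap0_le0 | gap0_gt0] := leP (f (x 0%N) - f xstar) 0.
  (* x 0 is a minimizer; since ln 0 = 0, Nstar = 0 and hence N = 0. *)
  have gap0 : f (x 0%N) - f xstar = 0 by apply/eqP; rewrite eq_le gap0_le0 subr_ge0 fs_le.
  move: N_le; rewrite /Nstar gap0 mulr0 mul0r ln0 // mulr0 ceil0 lez_nat leqn0 => /eqP ->.
  rewrite gap0 subrr enorm0 !mulr0 sqrtr0 !mulr0 mul0r addr0.
  by split => //; rewrite divr_ge0 ?mulr_ge0 ?sqr_ge0 // ltW.
split.
  case: stop_rule => [N_eq | [_ [stop _]]].
    apply: (gap_le_of_ln_le L_gt0 mu_gt0 Delta_gt0 grad_f g_lipschitz fs_le PL gt_err x_succ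
      gap0_gt0).
    by rewrite -[N%:R]/((N%:Z)%:~R) N_eq ceil_ge.
  exact: gap_le_of_stop mu_gt0 Delta_gt0 PL gt_err _ stop.
exact: (dist_le_of_le_Nstar L_gt0 mu_gt0 Delta_gt0 grad_f g_lipschitz fs_le PL gt_err x_succ
  gap0_gt0).
Qed.
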